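(* Let $\varepsilon>0$ be a constant and let $c_0>0$ be a sufficiently large constant (depending on $\varepsilon$). If $c_0/n\leq p\leq\ln(n)^7/n$, then with probability at least $9/10$ the random graph $G(n,p)$ has at most $1/p$ vertices of degree greater than $(1+\varepsilon)np$.
   Context: $G(n,p)$ is the random graph on $\{1,\dots,n\}$ with each possible edge present independently with probability $p$. *)

From HB Require Import structures.
From mathcomp Require Import all_boot all_order all_algebra.
From mathcomp Require Import all_classical all_reals all_analysis.
Set Implicit Arguments. Unset Strict Implicit. Unset Printing Implicit Defensive.
Import Order.TTheory GRing.Theory Num.Theory.
Local Open Scope ring_scope.

(* Possible edges of a simple graph on vertex set 'I_n = {0,...,n-1}:
   the 2-element subsets. A graph is a set of edges E with E \subset pairs n. *)
Definition pairs (n : nat) : {set {set 'I_n}} := [set e : {set 'I_n} | #|e| == 2%N].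

Definition deg (n : nat) (E : {set {set 'I_n}}) (v : 'I_n) : nat :=
  #|[set e in E | v \in e]|.

(* probability that G(n,p) has edge set exactly E (each of the pairs
   independently present with probability p) *)
Definition Gnp_weight (R : realType) (n : nat) (p : R) (E : {set {set 'I_n}}) : R :=
  p ^+ #|E| * (1 - p) ^+ (#|pairs n| - #|E|).

Definition Gnp_prob (R : realType) (n : nat) (p : R)
  (P : {set {set 'I_n}} -> bool) : R :=
  \sum_(E : {set {set 'I_n}} | (E \subset pairs n) && P E) Gnp_weight p E.

Definition high_deg (R : realType) (n : nat) (t : R) (E : {set {set 'I_n}})
  : {set 'I_n} := [set v | t < (deg E v)%:R].
Arguments Gnp_prob {R} n p P.

From HB Require Import structures.
From mathcomp Require Import all_boot all_order all_algebra.
From mathcomp Require Import all_classical all_reals all_analysis.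
From mathcomp Require Import ring lra.
Set Implicit Arguments.
Unset Strict Implicit.
Unset Printing Implicit Defensive.
Import Order.TTheory GRing.Theory Num.Theory.
Local Open Scope ring_scope.

(** A first-moment argument.  By Markov's inequality, the probability that
    more than [1/p] vertices have degree above [t = (1 + eps) n p] is at most
    [p] times the expected number of such vertices, i.e. at most
    [n p P(deg v > t)].  The degree of [v] is a sum of at most [n] independent
    Bernoulli([p]) variables, so the exponential moment method with base
    [a = 1 + eps/2] gives [P(deg v > t) <= exp (- d n p)] with
    [d = eps^2 / (4 + 2 eps)].  Finally [x exp (- d x) <= 2 / (d^2 x)], which
    is at most [1/10] once [n p >= c0 := 20 / d^2]. *)

Lemma sum_subsets_binomial_prod (R : comPzRingType) (T : finType) (S : {set T})
    (p : R) (g : T -> R) :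
  \sum_(A : {set T} | A \subset S)
     p ^+ #|A| * (1 - p) ^+ (#|S| - #|A|) * \prod_(x in A) g x
  = \prod_(x in S) (p * g x + (1 - p)).
Proof.
pose F x := if x \in S then p * g x else 0.
pose G x := if x \in S then 1 - p else 1.
have -> : \prod_(x in S) (p * g x + (1 - p)) = \prod_x (F x + G x).
  rewrite big_mkcond; apply: eq_bigr => x _; rewrite /F /G.
  by case: ifP => _; rewrite ?add0r.
rewrite bigA_distr [LHS]big_mkcond; apply: eq_big => // A _.
case: ifP => AS; last first.
  have /subsetPn [x xA xS] := negbT AS.
  by rewrite (bigD1 x) //= xA /F (negbTE xS) mul0r.
rewrite [RHS](bigID (mem A)) /=.
under [X in _ = X * _]eq_bigr => x xA
  do rewrite xA /F (fintype.subsetP AS x xA).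
under [X in _ = _ * X]eq_bigr => x xA do rewrite (negbTE xA) /G.
rewrite -big_mkcondr big_split /= !prodr_const mulrAC.
have -> : #|[pred x | (x \notin A) && (x \in S)]| = #|S :\: A|.
  by apply: eq_card => x; rewrite !inE andbC.
by rewrite (cardsDS AS).
Qed.

Lemma card_incident_pairs_le n (v : 'I_n) :
  (#|[set e in pairs n | v \in e]| <= n)%N.
Proof.
apply: (@leq_trans #|[set [set v; u] | u : 'I_n]|).
  apply: subset_leq_card; apply/fintype.subsetP => e.
  rewrite !inE => /andP [/cards2P [x [y [_ ->]]]].
  rewrite !inE => /orP [/eqP -> | /eqP ->]; apply/imsetP.
    by exists y.
  by exists x => //; rewrite finset.setUC.
by rewrite (leq_trans (leq_imset_card _ _)) // card_ord.
Qed.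

Lemma ln_ge1Vx (R : realType) (x : R) : 0 < x -> 1 - x^-1 <= ln x.
Proof.
move=> x0; have xV0 : 0 < x^-1 by rewrite invr_gt0.
have := @le_ln1Dx R (x^-1 - 1).
rewrite addrCA subrr addr0 lnV ?posrE // => lnV_le.
suff : - ln x <= x^-1 - 1 by lra.
by apply: lnV_le; lra.
Qed.

Lemma chernoff_exponent_le (R : realType) (eps lam : R) :
  0 < eps -> 0 <= lam ->
  lam * (1 + eps / 2 - 1) - (1 + eps) * lam * ln (1 + eps / 2)
  <= - (eps ^+ 2 / (4 + 2 * eps) * lam).
Proof.
move=> eps0 lam0; have a0 : 0 < 1 + eps / 2 by rewrite addr_gt0 ?divr_gt0.
have ln_ge : eps / (2 + eps) <= ln (1 + eps / 2).
  have -> : eps / (2 + eps) = 1 - (1 + eps / 2)^-1 by field; lra.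
  exact: ln_ge1Vx.
have -> : eps ^+ 2 / (4 + 2 * eps) * lam
    = (1 + eps) * lam * (eps / (2 + eps)) - lam * (1 + eps / 2 - 1).
  by field; lra.
have : 0 <= (1 + eps) * lam * (ln (1 + eps / 2) - eps / (2 + eps)).
  by rewrite !mulr_ge0 ?subr_ge0 // addr_ge0 ?ltW.
lra.
Qed.

Lemma mulr_expRN_le (R : realType) (d x : R) : 0 < d -> 0 < x ->
  x * expR (- (d * x)) <= 2 / (d ^+ 2 * x).
Proof.
move=> d0 x0; have := expR_ge1Dxn 1 (mulr_ge0 (ltW d0) (ltW x0)).
have -> : (d * x) ^+ 2 / (1.+1)`!%:R = x * (d ^+ 2 * x) / 2.
  by rewrite /=; ring.
move=> exp_ge; rewrite expRN ler_pdivlMr ?mulr_gt0 ?exprn_gt0 //.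
by rewrite mulrAC ler_pdivrMr ?expR_gt0 //; lra.
Qed.

Section GnpMean.
Variables (R : realType) (n : nat) (p : R).
Hypothesis p01 : 0 <= p <= 1.

Definition Gnp_mean (X : {set {set 'I_n}} -> R) : R :=
  \sum_(E : {set {set 'I_n}} | E \subset pairs n) Gnp_weight p E * X E.

Lemma Gnp_weight_ge0 (E : {set {set 'I_n}}) : 0 <= Gnp_weight p E.
Proof.
by have /andP[p0 p1] := p01; rewrite /Gnp_weight mulr_ge0 ?exprn_ge0 ?subr_ge0.
Qed.

Lemma ler_Gnp_mean (X Y : {set {set 'I_n}} -> R) :
  (forall E, X E <= Y E) -> Gnp_mean X <= Gnp_mean Y.
Proof.
by move=> XY; apply: ler_sum => E _; rewrite ler_wpM2l ?Gnp_weight_ge0.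
Qed.

Lemma Gnp_meanZ (c : R) (X : {set {set 'I_n}} -> R) :
  Gnp_mean (fun E => c * X E) = c * Gnp_mean X.
Proof. by rewrite mulr_sumr; apply: eq_bigr => E _; rewrite mulrCA. Qed.

Lemma Gnp_mean_sum (I : finType) (X : I -> {set {set 'I_n}} -> R) :
  Gnp_mean (fun E => \sum_i X i E) = \sum_i Gnp_mean (X i).
Proof.
rewrite exchange_big; apply: eq_bigr => E _; exact: mulr_sumr.
Qed.

Lemma Gnp_mean1 : Gnp_mean (fun _ => 1) = 1.
Proof.
transitivity (\sum_(E : {set {set 'I_n}} | E \subset pairs n)
   p ^+ #|E| * (1 - p) ^+ (#|pairs n| - #|E|) * \prod_(e in E) 1).
  by apply: eq_bigr => E _; rewrite big1_eq.
rewrite sum_subsets_binomial_prod big1 // => e _.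
by rewrite mulr1 addrC subrK.
Qed.

Lemma Gnp_probE (P : {set {set 'I_n}} -> bool) :
  Gnp_prob n p P = Gnp_mean (fun E => (P E)%:R).
Proof.
rewrite /Gnp_prob big_mkcondr; apply: eq_bigr => E _.
by case: (P E); rewrite ?mulr1 ?mulr0.
Qed.

Lemma Gnp_prob_all (P : {set {set 'I_n}} -> bool) :
  (forall E, P E) -> Gnp_prob n p P = 1.
Proof.
move=> allP; rewrite Gnp_probE -[RHS]Gnp_mean1.
by congr Gnp_mean; apply: funext => E; rewrite allP.
Qed.

Lemma Gnp_probC (P : {set {set 'I_n}} -> bool) :
  Gnp_prob n p P = 1 - Gnp_prob n p (fun E => ~~ P E).
Proof.
rewrite !Gnp_probE -[X in X - _]Gnp_mean1 /Gnp_mean -sumrB.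
apply: eq_bigr => E _.
by case: (P E) => /=; rewrite ?mulr1 ?mulr0 ?subr0 ?subrr.
Qed.

Lemma Gnp_prob_markov (X : {set {set 'I_n}} -> R) (s : R) :
  0 < s -> (forall E, 0 <= X E) ->
  Gnp_prob n p (fun E => s < X E) <= Gnp_mean X / s.
Proof.
move=> s0 X0; rewrite Gnp_probE mulrC -Gnp_meanZ; apply: ler_Gnp_mean => E.
case: (boolP (s < X E)) => /= [sX|_].
  by rewrite mulrC ler_pdivlMr // mul1r ltW.
by rewrite mulr_ge0 ?invr_ge0 ?X0 ?ltW.
Qed.

Lemma Gnp_mean_exp_deg (a : R) (v : 'I_n) :
  Gnp_mean (fun E => a ^+ deg E v)
  = (p * a + (1 - p)) ^+ #|[set e in pairs n | v \in e]|.
Proof.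
transitivity (\sum_(E : {set {set 'I_n}} | E \subset pairs n)
   p ^+ #|E| * (1 - p) ^+ (#|pairs n| - #|E|) *
     \prod_(e in E) (if v \in e then a else 1)).
  apply: eq_bigr => E _; congr (_ * _).
  rewrite -big_mkcondr prodr_const /deg; congr (_ ^+ _).
  by apply: eq_card => e; rewrite !inE.
rewrite sum_subsets_binomial_prod.
transitivity (\prod_(e in pairs n) (if v \in e then p * a + (1 - p) else 1)).
  by apply: eq_bigr => e _; case: ifP => _ //; rewrite mulr1 addrC subrK.
rewrite -big_mkcondr prodr_const; congr (_ ^+ _).
by apply: eq_card => e; rewrite [RHS]inE.
Qed.

Lemma Gnp_deg_tail_moment (a t : R) (v : 'I_n) : 1 <= a ->
  Gnp_prob n p (fun E => t < (deg E v)%:R)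
  <= expR (n%:R * p * (a - 1) - t * ln a).
Proof.
move=> a1; have /andP[p0 _] := p01; have a0 : 0 < a by apply: lt_le_trans a1.
have ind_le (E : {set {set 'I_n}}) :
    ((t < (deg E v)%:R)%R)%:R <= expR (- (t * ln a)) * a ^+ deg E v.
  case: ltrP => tdeg; last by rewrite mulr_ge0 ?expR_ge0 ?exprn_ge0 ?ltW.
  rewrite -[a ^+ _]lnK ?posrE ?exprn_gt0 // lnXn // -expRD -expR0 ler_expR.
  rewrite -mulr_natr (mulrC t) addrC -mulrBr.
  by rewrite mulr_ge0 ?ln_ge0 // subr_ge0 ltW.
rewrite Gnp_probE; apply: (le_trans (ler_Gnp_mean ind_le)).
rewrite Gnp_meanZ Gnp_mean_exp_deg expRD mulrC ler_wpM2r ?expR_ge0 //.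
have -> : p * a + (1 - p) = 1 + p * (a - 1) by ring.
have pa1 : 0 <= p * (a - 1) by rewrite mulr_ge0 ?subr_ge0.
have base_ge1 : 1 <= 1 + p * (a - 1) by rewrite lerDl.
apply: (@le_trans _ _ ((1 + p * (a - 1)) ^+ n)).
  by apply: ler_weXn2l base_ge1 _ _ _; exact: card_incident_pairs_le.
rewrite -mulrA expRM_natl lerXn2r ?nnegrE ?expR_ge0 ?addr_ge0 //.
exact: expR_ge1Dx.
Qed.

Lemma Gnp_deg_tail (eps : R) (v : 'I_n) : 0 < eps ->
  Gnp_prob n p (fun E => (1 + eps) * n%:R * p < (deg E v)%:R)
  <= expR (- (eps ^+ 2 / (4 + 2 * eps) * (n%:R * p))).
Proof.
move=> eps0; have /andP[p0 _] := p01.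
have a_ge1 : 1 <= 1 + eps / 2 by rewrite lerDl divr_ge0 ?ltW.
apply: (le_trans (Gnp_deg_tail_moment _ v a_ge1)).
rewrite ler_expR -[(1 + eps) * _ * p]mulrA.
exact: chernoff_exponent_le (mulr_ge0 (ler0n _ _) p0).
Qed.

Lemma Gnp_mean_card_high_deg (t : R) :
  Gnp_mean (fun E => #|high_deg t E|%:R)
  = \sum_(v : 'I_n) Gnp_prob n p (fun E => t < (deg E v)%:R).
Proof.
transitivity (Gnp_mean (fun E => \sum_(v : 'I_n) ((t < (deg E v)%:R)%R)%:R)).
  congr Gnp_mean; apply: funext => E.
  rewrite -sum1_card natr_sum big_mkcond /=; apply: eq_bigr => v _.
  by rewrite inE; case: (_ < _).
by rewrite Gnp_mean_sum; apply: eq_bigr => v _; rewrite Gnp_probE.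
Qed.

Lemma Gnp_prob_leNgt (X : {set {set 'I_n}} -> R) (s : R) :
  Gnp_prob n p (fun E => X E <= s) = 1 - Gnp_prob n p (fun E => s < X E).
Proof.
rewrite Gnp_probC; congr (1 - Gnp_prob _ _ _).
by apply: funext => E; rewrite ltNge.
Qed.

Lemma Gnp_prob_many_high_deg (eps : R) : 0 < eps -> 0 < p -> (0 < n)%N ->
  Gnp_prob n p (fun E => p^-1 < #|high_deg ((1 + eps) * n%:R * p) E|%:R)
  <= 2 / ((eps ^+ 2 / (4 + 2 * eps)) ^+ 2 * (n%:R * p)).
Proof.
move=> eps0 p0 n_gt0; set d := eps ^+ 2 / (4 + 2 * eps).
have d0 : 0 < d by rewrite divr_gt0 ?exprn_gt0 ?addr_gt0 ?mulr_gt0.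
have lam0 : 0 < n%:R * p by rewrite mulr_gt0 ?ltr0n.
have pV0 : 0 < p^-1 by rewrite invr_gt0.
apply: (le_trans (Gnp_prob_markov pV0 (fun E => ler0n R _))).
rewrite invrK Gnp_mean_card_high_deg.
apply: (@le_trans _ _ ((\sum_(v : 'I_n) expR (- (d * (n%:R * p)))) * p)).
  apply: ler_wpM2r; first exact: ltW.
  by apply: ler_sum => v _; exact: Gnp_deg_tail.
rewrite sumr_const card_ord -[_ *+ n]mulr_natl mulrAC.
exact: mulr_expRN_le.
Qed.

End GnpMean.

Theorem lemma11 (R : realType) (eps : R) :
  0 < eps ->
  exists c0 : R, 0 < c0 /\
    forall (n : nat) (p : R),
      0 <= p <= 1 ->
      c0 / n%:R <= p ->
      p <= (ln (n%:R : R)) ^+ 7 / n%:R ->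
      9 / 10 <= Gnp_prob n p
                  (fun E => (#|high_deg ((1 + eps) * n%:R * p) E|%:R <= p^-1)).
Proof.
move=> eps0; set d := eps ^+ 2 / (4 + 2 * eps).
have d0 : 0 < d by rewrite divr_gt0 ?exprn_gt0 ?addr_gt0 ?mulr_gt0.
have c0_gt0 : 0 < 20 / d ^+ 2 by rewrite divr_gt0 ?exprn_gt0.
exists (20 / d ^+ 2); split => // n p p01 c0_le _.
have [-> | n_gt0] := posnP n.
  rewrite Gnp_prob_all // => [|E]; first lra.
  have -> : #|high_deg ((1 + eps) * 0%:R * p) E| = 0%N.
    by apply: eq_card0 => -[].
  by rewrite invr_ge0; case/andP: p01.
have p0 : 0 < p by apply: lt_le_trans c0_le; rewrite divr_gt0 ?ltr0n.
have c0_le_lam : 20 <= d ^+ 2 * (n%:R * p).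
  rewrite mulrC -ler_pdivrMr ?exprn_gt0 //.
  by rewrite [_ * p]mulrC -ler_pdivrMr ?ltr0n.
have : 2 / (d ^+ 2 * (n%:R * p)) <= 1 / 10.
  by rewrite ler_pdivrMr; [lra | apply: lt_le_trans c0_le_lam].
have := Gnp_prob_many_high_deg p01 eps0 p0 n_gt0; rewrite -/d.
rewrite Gnp_prob_leNgt; lra.
Qed.
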